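(* Let $0<t_1<t_2$ and $x_1,x_2$ real with $\frac{x_1}{t_1}>\frac{x_2}{t_2}$. Suppose $F_i:[t_1,t_2]\to\mathbb R$, $i\ge1$, are concave, satisfy $F_i'(t)\le\frac{F_i(t)}{t}$ on $[t_1,t_2]$, and $F_i(t_1)=x_1$, $F_i(t_2)=x_2$. Then some subsequence of $(F_i)$ converges, uniformly on every interval $[t_1,t_2']$ with $t_2'<t_2$, to a concave function $F$ with $F'(t)\le\frac{F(t)}{t}$ and $F(t_1)=x_1$. *)

From HB Require Import structures.
From mathcomp Require Import all_boot all_order all_algebra.
From mathcomp Require Import all_classical all_reals all_analysis.
Set Implicit Arguments. Unset Strict Implicit. Unset Printing Implicit Defensive.
Import Order.TTheory GRing.Theory Num.Theory.
Import numFieldNormedType.Exports.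
Local Open Scope ring_scope.
Local Open Scope classical_set_scope.

Definition concave_on (R : realType) (D : set R) (f : R -> R) : Prop :=
  forall x y l, D x -> D y -> 0 <= l <= 1 ->
    l * f x + (1 - l) * f y <= f (l * x + (1 - l) * y).

Definition right_deriv (R : realType) (f : R -> R) (t d : R) : Prop :=
  (fun h : R => h^-1 * (f (t + h) - f t)) @ at_right 0 --> d.

(* F'(t) <= F(t)/t at t, reading F' as the right derivative. *)
Definition deriv_le_ratio (R : realType) (f : R -> R) (t : R) : Prop :=
  exists d, right_deriv f t d /\ d <= f t / t.

Definition unif_cvg_on (R : realType) (D : set R) (G : nat -> R -> R)
  (g : R -> R) : Prop :=
  forall eps : R, 0 < eps -> exists N : nat, forall k : nat, (N <= k)%N ->
    forall t, D t -> `|G k t - g t| < eps.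

(* Each F_i is squeezed between the chord from (t1, x1) to (t2, x2) and the
   line u |-> x1 u / t1: comparing a concave F with its tangent at t turns
   F'(t) <= F(t)/t into F(u)/u <= F(t)/t for t < u.  This gives a uniform bound, and on every
   [t1, s] with s < t2 a uniform Lipschitz bound (slopes are at most x1/t1
   and at least the slope of a chord to (t2, x2)).  A diagonal
   Bolzano-Weierstrass extraction makes the F_i converge on a countable
   grid, and equi-Lipschitz continuity upgrades this to uniform convergence
   on each [t1, s].  Concavity and the ratio inequality F(u) t <= F(t) u pass
   to the limit G, and for a concave G the ratio inequality makes the
   (monotone) right difference quotients at t bounded by G(t)/t, so the right
   derivative exists and satisfies G'(t) <= G(t)/t. *)

From HB Require Import structures.
From mathcomp Require Import all_boot all_order all_algebra.
From mathcomp Require Import all_classical all_reals all_analysis.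
From mathcomp Require Import ring lra.
Import Order.TTheory GRing.Theory Num.Theory.
Import numFieldNormedType.Exports.
Local Open Scope ring_scope.
Local Open Scope classical_set_scope.

Section concave.
Context {R : realType} {D : set R} {f : R -> R}.
Hypothesis f_concave : concave_on D f.

Lemma concave_chord_left {a b c : R} : D a -> D b -> a < b -> a <= c <= b ->
  (c - a) * (f b - f a) <= (b - a) * (f c - f a).
Proof.
move=> Da Db ab /andP[ac cb]; have ba : 0 < b - a by rewrite subr_gt0.
pose l := (b - c) / (b - a).
have l01 : 0 <= l <= 1.
  by rewrite /l divr_ge0 ?subr_ge0 ?(ltW ab) //= ler_pdivrMr // mul1r lerD2l lerN2.
have := f_concave a b l Da Db l01.
have -> : l * a + (1 - l) * b = c by rewrite /l; field; rewrite gt_eqF.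
rewrite -(ler_pM2l ba).
have -> : (b - a) * (l * f a + (1 - l) * f b) = (b - c) * f a + (c - a) * f b.
  by rewrite /l; field; rewrite gt_eqF.
lra.
Qed.

Lemma concave_chord_right {a b c : R} : D a -> D b -> a < b -> a <= c <= b ->
  (b - a) * (f b - f c) <= (b - c) * (f b - f a).
Proof.
move=> Da Db ab acb; have := concave_chord_left Da Db ab acb.
have -> : (b - c) * (f b - f a) = (b - a) * (f b - f a) - (c - a) * (f b - f a) by ring.
have -> : (b - a) * (f b - f c) = (b - a) * (f b - f a) - (b - a) * (f c - f a) by ring.
lra.
Qed.

Lemma concave_le_tangent {t u d : R} : D t -> D u -> t < u -> right_deriv f t d ->
  f u <= f t + d * (u - t).
Proof.
move=> Dt Du tu fd; have ut : 0 < u - t by rewrite subr_gt0.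
suff : (f u - f t) / (u - t) <= d by rewrite ler_pdivrMr //; lra.
apply: (cvgr_to_ge fd); near=> h.
have h0 : 0 < h by near: h; exact: nbhs_right_gt.
have hu : h < u - t by near: h; exact: nbhs_right_lt.
have thu : t <= t + h <= u by apply/andP; split; lra.
have := concave_chord_left Dt Du tu thu; rewrite addrAC subrr add0r => chord.
by rewrite ler_pdivrMr // mulrAC -mulrA ler_pdivlMl.
Unshelve. all: by end_near.
Qed.

Lemma concave_right_deriv {t e M : R} : D t -> 0 < e ->
  (forall h, 0 < h < e -> D (t + h)) ->
  (forall h, 0 < h < e -> h^-1 * (f (t + h) - f t) <= M) ->
  exists d, right_deriv f t d /\ d <= M.
Proof.
move=> Dt e0 De qM; pose q h := h^-1 * (f (t + h) - f t).
have q_nonincr : {in `]0, e[%R &, nonincreasing_fun q}.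
  move=> h h' /[!in_itv] /= /andP[h0 he] /andP[h'0 h'e].
  rewrite le_eqVlt => /predU1P[<- //|hh'].
  have Dh' : D (t + h') by apply: De; rewrite h'0.
  have tt' : t < t + h' by lra.
  have tht' : t <= t + h <= t + h' by apply/andP; split; lra.
  have := concave_chord_left Dt Dh' tt' tht'.
  rewrite !(addrAC t _ (- t)) subrr !add0r => chord.
  by rewrite /q mulrC ler_pdivrMr // -mulrA ler_pdivlMl //; lra.
have q_ub : has_ubound (q @` [set` `]0, e[%R]).
  by exists M => _ [h + <-]; rewrite /= in_itv /=; exact: qM.
have := nonincreasing_at_right_cvgr (b := BLeft e) _ q_nonincr q_ub.
move=> /(_ ltac:(by rewrite bnd_simp)) qcvg.
exists (sup (q @` [set` `]0, e[%R])); split => //.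
apply: (cvgr_to_le qcvg); near=> h; apply: qM; apply/andP; split.
  by near: h; exact: nbhs_right_gt.
by near: h; exact: nbhs_right_lt.
Unshelve. all: by end_near.
Qed.

Lemma concave_ratio_le {t u : R} : 0 < t -> D t -> D u -> t < u ->
  deriv_le_ratio f t -> f u * t <= f t * u.
Proof.
move=> t0 Dt Du tu [d [fd]]; rewrite ler_pdivlMr // => dt_le.
have ut0 : 0 <= u - t by lra.
have := ler_wpM2r (ltW t0) (concave_le_tangent Dt Du tu fd).
have := ler_wpM2r ut0 dt_le.
lra.
Qed.

Lemma concave_deriv_le_ratio {t e : R} : 0 < t -> D t -> 0 < e ->
  (forall u, t < u < t + e -> D u) ->
  (forall u, t < u < t + e -> f u * t <= f t * u) -> deriv_le_ratio f t.
Proof.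
move=> t0 Dt e0 De ratio_le.
apply: (concave_right_deriv Dt e0) => h /andP[h0 he];
  have th : t < t + h < t + e by apply/andP; split; lra.
  exact: De.
have ratio_h := ratio_le _ th.
rewrite mulrC ler_pdivrMr // mulrAC ler_pdivlMr //; lra.
Qed.

End concave.

Lemma is_interval_conv {R : realType} {D : set R} {x y l : R} : is_interval D ->
  D x -> D y -> 0 <= l <= 1 -> D (l * x + (1 - l) * y).
Proof.
move=> iD Dx Dy /andP[l0 l1].
have [xy|yx] := leP x y.
  by apply: (iD x y) => //; apply/andP; split; nra.
by apply: (iD y x) => //; apply/andP; split; nra.
Qed.

Lemma concave_on_cvg {R : realType} {D : set R} (g : nat -> R -> R) (G : R -> R) :
  is_interval D -> (forall k, concave_on D (g k)) ->
  (forall t, D t -> g ^~ t @ \oo --> G t) -> concave_on D G.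
Proof.
move=> iD g_concave gG x y l Dx Dy l01.
apply: (ler_cvg_to _ (gG _ (is_interval_conv iD Dx Dy l01))).
  exact: cvgD (cvgM (cvg_cst l) (gG x Dx)) (cvgM (cvg_cst (1 - l)) (gG y Dy)).
by near=> k; exact: g_concave.
Unshelve. all: by end_near.
Qed.

(* f t <= x1 t / t1 bounds f from above, the chord from (t1, x1) to (t2, x2)
   from below; slopes on [t1, s] lie between -2 sup_bound / (t2 - s) (a chord
   to (t2, x2)) and x1 / t1 (the chord from (t1, x1)). *)
Definition sup_bound {R : realType} (t1 t2 x1 x2 : R) : R :=
  `|x1| + `|x2| + `|x1 / t1| * t2.

Definition lipschitz_bound {R : realType} (t1 t2 x1 x2 s : R) : R :=
  `|x1 / t1| + 2 * sup_bound t1 t2 x1 x2 / (t2 - s).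

Section admissible.
Context {R : realType} {t1 t2 x1 x2 : R} {f : R -> R}.
Hypotheses (t1_gt0 : 0 < t1) (t12 : t1 < t2).
Hypotheses (f_concave : concave_on [set t | t1 <= t <= t2] f)
  (f_deriv_t1 : deriv_le_ratio f t1) (f_t1 : f t1 = x1) (f_t2 : f t2 = x2).

Let in_t1 : t1 <= t1 <= t2. Proof. by rewrite lexx ltW. Qed.
Let in_t2 : t1 <= t2 <= t2. Proof. by rewrite lexx ltW. Qed.

Lemma admissible_ratio_le {t : R} : t1 <= t <= t2 -> f t * t1 <= x1 * t.
Proof.
move=> tI; have [<-|t1t] := eqVneq t1 t; first by rewrite f_t1.
rewrite -f_t1; apply: (concave_ratio_le f_concave) => //.
by rewrite lt_neqAle t1t; case/andP: tI.
Qed.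

Lemma admissible_norm_le {t : R} : t1 <= t <= t2 -> `|f t| <= sup_bound t1 t2 x1 x2.
Proof.
move=> tI; have /andP[t1t tt2] := tI.
have chord := concave_chord_left f_concave in_t1 in_t2 t12 tI.
rewrite f_t1 f_t2 in chord.
have ratio := admissible_ratio_le tI.
have Mt : x1 / t1 * t <= `|x1 / t1| * t2.
  apply: (@le_trans _ _ (`|x1 / t1| * t)); last by rewrite ler_wpM2l.
  by apply: ler_wpM2r; [exact: le_trans (ltW t1_gt0) t1t | exact: ler_norm].
have n1 := normr_ge0 x1; have n2 := normr_ge0 x2.
rewrite ler_norml /sup_bound; apply/andP; split.
  have nx1 := lerNnormlW (lexx `|x1|); have nx2 := lerNnormlW (lexx `|x2|).
  have p1 : 0 <= (t2 - t) * (x1 + `|x1|) by apply: mulr_ge0; lra.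
  have p2 : 0 <= (t - t1) * (x2 + `|x2|) by apply: mulr_ge0; lra.
  have p3 : 0 <= (t - t1) * `|x1| by apply: mulr_ge0; lra.
  have p4 : 0 <= (t2 - t) * `|x2| by apply: mulr_ge0; lra.
  have : 0 <= (t2 - t1) * (f t + `|x1| + `|x2|) by lra.
  rewrite pmulr_rge0 ?subr_gt0 //.
  have : 0 <= `|x1 / t1| * t2 by rewrite mulr_ge0 // ltW // (lt_trans t1_gt0).
  lra.
rewrite -ler_pdivlMr // mulrAC in ratio.
lra.
Qed.

Lemma admissible_increment_le {x y : R} : t1 <= x -> x <= y -> y <= t2 ->
  f y - f x <= `|x1 / t1| * (y - x).
Proof.
move=> t1x xy yt2; have [<-|xy'] := eqVneq x y; first by rewrite !subrr mulr0.
have {xy xy'} xy : x < y by rewrite lt_neqAle xy' xy.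
have t1y : t1 < y by lra.
have yI : t1 <= y <= t2 by rewrite yt2 ltW.
have xI : t1 <= x <= y by rewrite t1x ltW.
have := concave_chord_right f_concave in_t1 yI t1y xI; rewrite f_t1 => chord.
have yx0 : 0 <= y - x by lra.
have ratio : (f y - x1) * t1 <= x1 * (y - t1) by have := admissible_ratio_le yI; lra.
have h1 := ler_wpM2l (ltW t1_gt0) chord; have h2 := ler_wpM2l yx0 ratio.
have : (y - t1) * (t1 * (f y - f x)) <= (y - t1) * (x1 * (y - x)) by lra.
rewrite ler_pM2l ?subr_gt0 // => key.
apply: (@le_trans _ _ (x1 / t1 * (y - x))); last by rewrite ler_wpM2r // ler_norm.
by rewrite mulrAC ler_pdivlMr // mulrC.
Qed.

Lemma admissible_decrement_le {s x y : R} : s < t2 -> t1 <= x -> x <= y -> y <= s ->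
  f x - f y <= 2 * sup_bound t1 t2 x1 x2 / (t2 - s) * (y - x).
Proof.
move=> st2 t1x xy ys; have ts0 : 0 < t2 - s by lra.
have xt2 : x < t2 by lra.
have xI : t1 <= x <= t2 by rewrite t1x ltW.
have yI : x <= y <= t2 by rewrite xy; lra.
have := concave_chord_left f_concave xI in_t2 xt2 yI; rewrite f_t2 => chord.
have := admissible_norm_le xI; have := admissible_norm_le in_t2.
rewrite f_t2 !ler_norml => /andP[x2l x2u] /andP[fxl fxu].
have yx0 : 0 <= y - x by lra.
have diff_ge : - (2 * sup_bound t1 t2 x1 x2) <= x2 - f x by lra.
have h := ler_wpM2l yx0 diff_ge.
rewrite mulrAC ler_pdivlMr //.
have [fxy|fxy] := lerP (f x - f y) 0.
  have : 0 <= 2 * sup_bound t1 t2 x1 x2 * (y - x) by apply: mulr_ge0; lra.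
  have : (f x - f y) * (t2 - s) <= 0 by rewrite pmulr_lle0.
  lra.
have sx : t2 - s <= t2 - x by lra.
have h' := ler_wpM2l (ltW fxy) sx.
lra.
Qed.

Lemma admissible_lipschitz {s x y : R} : s < t2 -> t1 <= x <= s -> t1 <= y <= s ->
  `|f y - f x| <= lipschitz_bound t1 t2 x1 x2 s * `|y - x|.
Proof.
move=> st2; wlog xy : x y / x <= y.
  move=> wlog_xy xI yI; have [xy|yx] := leP x y; first exact: wlog_xy.
  by rewrite distrC (distrC y); apply: wlog_xy => //; exact: ltW.
move=> /andP[t1x xs] /andP[t1y ys].
have yt2 : y <= t2 by lra.
have incr := admissible_increment_le t1x xy yt2.
have decr := admissible_decrement_le st2 t1x xy ys.
have C0 : 0 <= 2 * sup_bound t1 t2 x1 x2 / (t2 - s).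
  rewrite divr_ge0 ?mulr_ge0 ?subr_ge0 ?(ltW st2) //.
  exact: le_trans (normr_ge0 _) (admissible_norm_le in_t2).
have yx0 : 0 <= y - x by lra.
have := mulr_ge0 C0 yx0; have := mulr_ge0 (normr_ge0 (x1 / t1)) yx0.
rewrite /lipschitz_bound (ger0_norm yx0) ler_norml => h1 h2.
by apply/andP; split; lra.
Qed.

End admissible.

Lemma increasing_seq_ge {f : nat -> nat} : increasing_seq f -> forall n, (n <= f n)%N.
Proof.
move=> /increasing_seqP f_incr; elim=> // n IH.
exact: leq_ltn_trans IH (f_incr n).
Qed.

Lemma cvg_eventually_reindexed {T : topologicalType} {v w : nat -> T} {l : T} (K : nat) :
  v @ \oo --> l -> (forall k, (K <= k)%N -> exists2 r, (k <= r)%N & w k = v r) ->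
  w @ \oo --> l.
Proof.
move=> vl wv A /vl [N _ vA]; exists (maxn K N) => // k /=.
rewrite geq_max => /andP[Kk Nk]; have [r kr ->] := wv k Kk.
exact/vA/(leq_trans Nk kr).
Qed.

Lemma bounded_fun_comp {R : realType} {u : nat -> R} (s : nat -> nat) :
  bounded_fun u -> bounded_fun (u \o s).
Proof. rewrite /= /bounded_near; apply: filterS => M uM k _; exact: uM. Qed.

Lemma bounded_fun_le {R : realType} (u : nat -> R) (M : R) :
  (forall k, `|u k| <= M) -> bounded_fun u.
Proof.
move=> uM; rewrite /= /bounded_near; near=> N => k _.
by apply: le_trans (uM k) _; near: N; apply: nbhs_pinfty_ge; exact: num_real.
Unshelve. all: by end_near.
Qed.

Section diagonal_extraction.
Context {R : realType} {a : nat -> nat -> R} {refine : nat -> (nat -> nat) -> nat -> nat}.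
Hypothesis refine_incr : forall m s, increasing_seq (refine m s).
Hypothesis refine_cvg : forall m s, cvgn (a m \o s \o refine m s).

(* nested m composes the first m refinements; nested (m + n) factors through
   nested m, so the diagonal k |-> nested k.+1 k is, from index m on, a
   subsequence of nested m.+1. *)
Fixpoint nested (m : nat) : nat -> nat :=
  if m is m'.+1 then nested m' \o refine m' (nested m') else id.

Lemma nested_incr m : increasing_seq (nested m).
Proof. by elim: m => [//|m IH] i j /=; rewrite IH; exact: refine_incr. Qed.

Lemma nested_tail m n k : exists2 r, (k <= r)%N & nested (m + n) k = nested m r.
Proof.
elim: n k => [|n IH] k; first by exists k; rewrite ?addn0.
rewrite addnS /=; have [r kr ->] := IH (refine (m + n) (nested (m + n)) k).
by exists r => //; exact: leq_trans (increasing_seq_ge (refine_incr _ _) k) kr.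
Qed.

Let diagonal k := nested k.+1 k.

Lemma diagonal_incr : increasing_seq diagonal.
Proof.
apply/increasing_seqP => k; rewrite /diagonal [nested k.+2]/=.
rewrite -/(nested k.+1) (leW_mono (nested_incr k.+1)).
exact: leq_trans (ltnSn k) (increasing_seq_ge (refine_incr _ _) k.+1).
Qed.

Lemma diagonal_cvg m : cvgn (a m \o diagonal).
Proof.
apply/cvg_ex; exists (lim (a m \o nested m.+1 @ \oo)).
apply: (cvg_eventually_reindexed m (refine_cvg m (nested m))) => k mk.
have [r kr e] := nested_tail m.+1 (k - m) k; rewrite addSn subnKC // in e.
by exists r => //; rewrite /= /diagonal e.
Qed.

End diagonal_extraction.

Lemma common_cvg_subseq {R : realType} (I : countType) (a : I -> nat -> R) :
  (forall i, bounded_fun (a i)) ->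
  exists2 phi : nat -> nat, increasing_seq phi & forall i, cvgn (a i \o phi).
Proof.
move=> a_bd; pose b m := if unpickle m is Some i then a i else fun=> 0.
have b_bd m : bounded_fun (b m).
  by rewrite /b; case: (unpickle m) => [i|]; [exact: a_bd | exact: bounded_cst].
have /choice [refine refineP] : forall ms : nat * (nat -> nat),
    exists tau, increasing_seq tau /\ cvgn (b ms.1 \o ms.2 \o tau).
  move=> [m s]; have := bolzano_weierstrass (bounded_fun_comp s (b_bd m)).
  by case=> tau tau_incr tau_cvg; exists tau.
have refine_incr m s := (refineP (m, s)).1; have refine_cvg m s := (refineP (m, s)).2.
exists (fun k => @nested (fun m s => refine (m, s)) k.+1 k).
  exact: diagonal_incr refine_incr.
by move=> i; have := diagonal_cvg refine_incr refine_cvg (pickle i); rewrite /b pickleK.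
Qed.

Section uniform_cauchy.
Context {R : realType}.

Definition unif_cauchy_on (D : set R) (G : nat -> R -> R) : Prop :=
  forall eps : R, 0 < eps -> exists N : nat, forall j k : nat, (N <= j)%N -> (N <= k)%N ->
    forall t, D t -> `|G j t - G k t| < eps.

Lemma unif_cauchy_on_cvg {D G} {t : R} : unif_cauchy_on D G -> D t -> cvgn (G ^~ t).
Proof.
move=> GC Dt; apply: cauchy_cvg; apply: cauchy_exP => e e0.
have [N GN] := GC e e0; exists (G N t); exists N => // k /= Nk.
by rewrite -ball_normE /ball_ /=; exact: GN.
Qed.

Lemma unif_cauchy_on_unif_cvg D G : unif_cauchy_on D G ->
  unif_cvg_on D G (fun t => lim (G ^~ t @ \oo)).
Proof.
move=> GC e e0; have [N GN] := GC (e / 2) (divr_gt0 e0 (ltr0Sn _ 1)).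
exists N => k Nk t Dt; have Gt := unif_cauchy_on_cvg GC Dt.
suff : `|G k t - lim (G ^~ t @ \oo)| <= e / 2 by lra.
apply: (ler_cvg_to (cvg_norm (cvgB (cvg_cst (G k t)) Gt)) (cvg_cst (e / 2))).
by exists N => // j Nj /=; apply/ltW/GN.
Qed.

End uniform_cauchy.

Section grid.
Context {R : realType}.

(* The n.+2 points of the uniform subdivision of [a, b] into n.+1 pieces;
   indices j > n.+1 are clamped to b. *)
Definition grid (a b : R) (n j : nat) : R :=
  a + (minn j n.+1)%:R * ((b - a) / n.+1%:R).

Lemma grid_itv {a b : R} (n j : nat) : a <= b -> a <= grid a b n j <= b.
Proof.
move=> ab; rewrite /grid; set w := (b - a) / n.+1%:R.
have w0 : 0 <= w by rewrite divr_ge0 ?subr_ge0.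
have nw : n.+1%:R * w = b - a by rewrite /w mulrC divfK ?pnatr_eq0.
have jn : (minn j n.+1)%:R <= n.+1%:R :> R by rewrite ler_nat geq_minr.
have := ler_wpM2r w0 jn; rewrite nw => jw.
have : 0 <= (minn j n.+1)%:R * w by rewrite mulr_ge0.
lra.
Qed.

Lemma grid_below {a b : R} (n : nat) {t : R} : a < b -> a <= t <= b ->
  exists2 j, (j <= n.+1)%N &
    grid a b n j <= t < grid a b n j + (b - a) / n.+1%:R.
Proof.
move=> ab /andP[le_at le_tb]; set w := (b - a) / n.+1%:R.
have w0 : 0 < w by rewrite divr_gt0 ?subr_gt0.
have nw : n.+1%:R * w = b - a by rewrite /w mulrC divfK ?pnatr_eq0.
have ta0 : 0 <= t - a by lra.
have /andP[jt tj] := truncn_itv (divr_ge0 ta0 (ltW w0)).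
set j := Num.truncn _ in jt tj.
have jn : (j <= n.+1)%N.
  rewrite -(ler_nat R); apply: le_trans jt _.
  by rewrite ler_pdivrMr // nw; lra.
exists j => //; rewrite /grid (minn_idPl jn) -/w.
rewrite ler_pdivlMr // in jt; rewrite ltr_pdivrMr // -addn1 natrD mulrDl mul1r in tj.
by apply/andP; split; lra.
Qed.

Lemma lipschitz_grid_unif_cauchy {g : nat -> R -> R} {a b c : R} (K : R) :
  a < b -> c <= b ->
  (forall k x y, a <= x <= c -> a <= y <= c -> `|g k y - g k x| <= K * `|y - x|) ->
  (forall n j, cvgn (g ^~ (grid a b n j))) ->
  unif_cauchy_on [set t | a <= t <= c] g.
Proof.
move=> ab cb g_lip g_cvg e e0; have e4 : 0 < e / 4 by rewrite divr_gt0.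
(* A mesh w with |K| w < e / 4: each t is within w to the right of a grid
   point p, and g k t is e / 2 close to the limit at p for all large k. *)
pose n := Num.truncn (4 * `|K| * (b - a) / e); pose w := (b - a) / n.+1%:R.
have Kw : `|K| * w < e / 4.
  have X0 : 0 <= 4 * `|K| * (b - a) / e.
    by rewrite divr_ge0 ?(ltW e0) // !mulr_ge0 // subr_ge0 ltW.
  have /andP[_] := truncn_itv X0.
  rewrite -/n ltr_pdivrMr // /w mulrA ltr_pdivrMr //.
  lra.
pose l (j : nat) := lim (g ^~ (grid a b n j) @ \oo).
have [N _ gN] : \forall k \near \oo,
    forall j : 'I_n.+2, `|l j - g k (grid a b n j)| < e / 4.
  by apply: filter_forall => j; exact: (cvgrPdist_lt _ _).1 (g_cvg n j) _ e4.
exists N => j k Nj Nk t /andP[le_at le_tc].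
have tI : a <= t <= b by rewrite le_at; lra.
have [i i_le /andP[pt tp]] := grid_below n ab tI.
set p := grid a b n i in pt tp; rewrite -/w in tp.
have pI : a <= p <= c by have /andP[ap _] := grid_itv n i (ltW ab); rewrite ap; lra.
have near_p m : (N <= m)%N -> `|g m t - l i| < e / 2.
  move=> Nm; have := gN m Nm (Ordinal (i_le : (i < n.+2)%N)); rewrite /= -/p distrC.
  have tI' : a <= t <= c by rewrite le_at.
  have tp0 : 0 <= t - p by lra.
  have tpw : t - p <= w by lra.
  have Ktp : K * `|t - p| <= `|K| * w.
    rewrite (ger0_norm tp0); apply: le_trans (ler_wpM2r tp0 (ler_norm K)) _.
    by apply: ler_wpM2l.
  have := g_lip m p t pI tI'; have := ler_distD (g m p) (g m t) (l i).
  lra.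
have := near_p j Nj; have := near_p k Nk; have := ler_distD (l i) (g j t) (g k t).
rewrite (distrC (l i)); lra.
Qed.

End grid.

Section admissible_limit.
Context {R : realType} {t1 t2 x1 : R} {F : nat -> R -> R} {G : R -> R}.
Hypotheses (t1_gt0 : 0 < t1)
  (F_concave : forall k, concave_on [set t | t1 <= t <= t2] (F k))
  (F_deriv : forall k t, t1 <= t < t2 -> deriv_le_ratio (F k) t)
  (F_t1 : forall k, F k t1 = x1)
  (F_cvg : forall t, t1 <= t < t2 -> F ^~ t @ \oo --> G t).

Lemma limit_concave : concave_on [set t | t1 <= t < t2] G.
Proof.
apply: concave_on_cvg F_cvg.
  move=> x y /andP[t1x _] /andP[_ yt2] z /andP[xz zy].
  by rewrite /= (le_trans t1x xz) (le_lt_trans zy yt2).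
move=> k x y l /andP[t1x /ltW xt2] /andP[t1y /ltW yt2].
by apply: F_concave; rewrite /= ?t1x ?t1y.
Qed.

Lemma limit_deriv_le_ratio t : t1 <= t < t2 -> deriv_le_ratio G t.
Proof.
move=> tI; have /andP[t1t tt2] := tI; have t0 := lt_le_trans t1_gt0 t1t.
have e0 : 0 < t2 - t by lra.
apply: (concave_deriv_le_ratio limit_concave t0 tI e0) => u /andP[tu ut2].
  by apply/andP; split; lra.
have uI : t1 <= u < t2 by apply/andP; split; lra.
apply: (ler_cvg_to (cvgM (F_cvg _ uI) (cvg_cst t)) (cvgM (F_cvg _ tI) (cvg_cst u))).
near=> k; apply: (concave_ratio_le (F_concave k)) => //.
- by rewrite /= t1t ltW.
- by apply/andP; split; lra.
- exact: F_deriv.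
Unshelve. all: by end_near.
Qed.

Lemma limit_t1 : t1 < t2 -> G t1 = x1.
Proof.
move=> t12; have /F_cvg : t1 <= t1 < t2 by rewrite lexx.
have -> : F ^~ t1 = fun=> x1 by apply/funext => k; exact: F_t1.
by move=> Gt1; apply: (cvg_unique _ Gt1 (cvg_cst x1)).
Qed.

End admissible_limit.

Section admissible_family.
Context {R : realType} {t1 t2 x1 x2 : R} {F : nat -> R -> R}.
Hypotheses (t1_gt0 : 0 < t1) (t12 : t1 < t2)
  (F_concave : forall k, concave_on [set t | t1 <= t <= t2] (F k))
  (F_deriv_t1 : forall k, deriv_le_ratio (F k) t1)
  (F_t1 : forall k, F k t1 = x1) (F_t2 : forall k, F k t2 = x2).

Lemma admissible_subseq_unif_cauchy : exists2 phi : nat -> nat, increasing_seq phi &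
  forall s, s < t2 -> unif_cauchy_on [set t | t1 <= t <= s] (fun k => F (phi k)).
Proof.
pose a (nj : nat * nat) k := F k (grid t1 t2 nj.1 nj.2).
have [phi phi_incr phi_cvg] : exists2 phi : nat -> nat, increasing_seq phi &
    forall nj, cvgn (a nj \o phi).
  apply: common_cvg_subseq => -[n j].
  apply: (bounded_fun_le _ (sup_bound t1 t2 x1 x2)) => k; rewrite /a /=.
  apply: (admissible_norm_le t1_gt0 t12 (F_concave k) (F_deriv_t1 k) (F_t1 k) (F_t2 k)).
  by apply: grid_itv; exact: ltW.
exists phi => // s st2.
apply: (lipschitz_grid_unif_cauchy (lipschitz_bound t1 t2 x1 x2 s) t12 (ltW st2)).
  move=> k x y xI yI.
  exact: (admissible_lipschitz t1_gt0 t12 (F_concave (phi k)) (F_deriv_t1 _)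
    (F_t1 _) (F_t2 _)).
by move=> n j; exact: (phi_cvg (n, j)).
Qed.

End admissible_family.

Theorem lemma5 (R : realType) (t1 t2 x1 x2 : R) (F : nat -> R -> R) :
  0 < t1 -> t1 < t2 -> x2 / t2 < x1 / t1 ->
  (forall i, concave_on [set t | t1 <= t <= t2] (F i)) ->
  (forall i t, t1 <= t < t2 -> deriv_le_ratio (F i) t) ->
  (forall i, F i t1 = x1) ->
  (forall i, F i t2 = x2) ->
  exists (phi : nat -> nat) (G : R -> R),
    (forall n, (phi n < phi n.+1)%N) /\
    (forall t2', t2' < t2 ->
       unif_cvg_on [set t | t1 <= t <= t2'] (fun k => F (phi k)) G) /\
    concave_on [set t | t1 <= t < t2] G /\
    (forall t, t1 <= t < t2 -> deriv_le_ratio G t) /\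
    G t1 = x1.
Proof.
move=> t1_gt0 t12 _ F_concave F_deriv F_t1 F_t2.
have F_deriv_t1 k : deriv_le_ratio (F k) t1 by apply: F_deriv; rewrite lexx.
have [phi phi_incr Fphi_cauchy] :=
  admissible_subseq_unif_cauchy t1_gt0 t12 F_concave F_deriv_t1 F_t1 F_t2.
pose G t := lim (F (phi k) t @[k --> \oo]).
have Fphi_cvg t : t1 <= t < t2 -> F (phi k) t @[k --> \oo] --> G t.
  move=> /andP[t1t tt2]; apply: (unif_cauchy_on_cvg (Fphi_cauchy t tt2)).
  by rewrite /= t1t lexx.
exists phi, G; split; first by move/increasing_seqP: phi_incr.
split; first by move=> s st2; exact: unif_cauchy_on_unif_cvg (Fphi_cauchy s st2).
have Fphi_concave k := F_concave (phi k); have Fphi_deriv k := F_deriv (phi k).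
split; first exact: limit_concave Fphi_concave Fphi_cvg.
split; first exact: limit_deriv_le_ratio t1_gt0 Fphi_concave Fphi_deriv Fphi_cvg.
exact: limit_t1 (fun k => F_t1 (phi k)) Fphi_cvg t12.
Qed.
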